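(* Let $G$ be a finite $2$-group. (i) If $\psi'(G)>\frac{19}{43}$, then $G$ is an $M$-group; more precisely, up to isomorphism $G$ is one of: $\mathcal{C}_{2^k}$ ($k\ge 0$); $\mathcal{C}_{2^{k-1}}\times\mathcal{C}_2$ ($k\ge 2$); $M(2^k)$ ($k\ge 4$); $Q_8$ (these classes being pairwise disjoint). (ii) If $\psi'(G)=\frac{19}{43}$, then $G\simeq D_8$. (iii) If $\frac{31}{77}<\psi'(G)<\frac{19}{43}$, then $G\simeq Q_{16}$.
   Context: For a finite group $G$, $\psi(G)=\sum_{x\in G} o(x)$ and $\psi'(G)=\psi(G)/\psi(\mathcal{C}_{|G|})$, where $\mathcal{C}_n$ is the cyclic group of order $n$. A group is an $M$-group if its subgroup lattice is modular. For $k\ge 4$, $M(2^k)=\langle x,y\mid x^{2^{k-1}}=y^2=1,\ yxy^{-1}=x^{2^{k-2}+1}\rangle$. $Q_{2^k}=\langle x,y\mid x^{2^{k-2}}=y^2,\ y^4=1,\ yxy^{-1}=x^{-1}\rangle$ is the generalized quaternion group of order $2^k$ ($k\ge3$); $D_8$ is the dihedral group of order $8$. *)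

From mathcomp Require Import all_boot all_order all_algebra all_fingroup all_solvable.
Set Implicit Arguments. Unset Strict Implicit. Unset Printing Implicit Defensive.
Import GRing.Theory Num.Theory.

Local Open Scope group_scope.

Definition psi (gT : finGroupType) (G : {set gT}) : nat := (\sum_(x in G) #[x])%N.

(* psi(C_n): the cyclic group of order n is realized as Zp n (order n for n > 0,
   a cyclic subgroup of 'Z_n). *)
Definition psiC (n : nat) : nat := psi (Zp n).

Definition psi' (gT : finGroupType) (G : {set gT}) : rat :=
  ((psi G)%:R / (psiC #|G|)%:R)%R.

(* M-group: the subgroup lattice of G (meet = intersection, join = generated
   subgroup) is modular. *)
Definition Mgroup (gT : finGroupType) (G : {group gT}) : Prop :=
  forall H K L : {group gT}, H \subset G -> K \subset G -> L \subset G ->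
    H \subset L -> H <*> (K :&: L) = (H <*> K) :&: L.

Definition is_cyclic2 (gT : finGroupType) (G : {group gT}) (k : nat) : Prop :=
  G \isog Grp (x : x ^+ (2 ^ k)).

Definition is_cyc_x_C2 (gT : finGroupType) (G : {group gT}) (k : nat) : Prop :=
  G \isog Grp (x : y : x ^+ (2 ^ k.-1), y ^+ 2, x * y = y * x).

Definition is_M (gT : finGroupType) (G : {group gT}) (k : nat) : Prop :=
  G \isog Grp (x : y : x ^+ (2 ^ k.-1), y ^+ 2, x ^ y^-1 = x ^+ (2 ^ (k - 2) + 1)).

Definition is_Q (gT : finGroupType) (G : {group gT}) (k : nat) : Prop :=
  G \isog Grp (x : y : x ^+ (2 ^ (k - 2)) = y ^+ 2, y ^+ 4, x ^ y^-1 = x^-1).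

Definition is_D8 (gT : finGroupType) (G : {group gT}) : Prop :=
  G \isog Grp (x : y : x ^+ 4, y ^+ 2, x ^ y^-1 = x^-1).

From mathcomp Require Import all_boot all_order all_algebra all_fingroup all_solvable.
From mathcomp Require Import zify.
Import GRing.Theory Num.Theory.
Set Implicit Arguments. Unset Strict Implicit. Unset Printing Implicit Defensive.

(* If [#[t] %| 2 ^ n] then [#[t] + \sum_(k < n) 2 ^ k * (t ^+ 2 ^ k == 1) = 2 ^ n]; summing over a
   2-group [G] of order [2 ^ n] relates [psi G] to the sizes of the sets [t ^+ 2 ^ k = 1].  This gives
   [3 psi(C_(2^n)) = 2 * 4 ^ n + 1], and [3 psi G >= 4 ^ n + 5] whenever those sets have at most
   [2 ^ k.+1] elements for [0 < k < n].  If [exponent G <= 2 ^ n / 4] then [psi G <= 4 ^ n / 4],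
   well below [31/77] of [psi(C_(2^n))].  Otherwise [G] is cyclic or has a cyclic maximal subgroup
   [<[x]>], hence is [C_(2^(n-1)) x C_2], [M(2^n)], dihedral, semidihedral or generalized quaternion.
   The first two satisfy the bound above and have permutable subgroups, hence a modular lattice; in
   the other three the elements outside [<[x]>] have order 2 or 4, which pins down [psi G] well
   enough to leave only [D_8], [Q_8] and [Q_16] above [31/77]. *)

Lemma mulnn_expn2 k : 2 ^ k * 2 ^ k = 4 ^ k.
Proof. by rewrite -expnMn. Qed.

Local Open Scope group_scope.

Section ElementOrders.

Variable gT : finGroupType.
Implicit Types (A : {set gT}) (t x : gT).

Lemma order_add_sum_expg_eq1 t n : #[t] %| 2 ^ n ->
  (#[t] + \sum_(k < n) 2 ^ k * (t ^+ (2 ^ k) == 1)%g)%N = (2 ^ n)%N.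
Proof.
elim: n => [|n IHn] dt.
  by rewrite big_ord0 addn0; apply/eqP; rewrite -dvdn1.
rewrite big_ord_recr /=; have [dtn | ndtn] := boolP (#[t] %| 2 ^ n).
  by rewrite addnA IHn // -order_dvdn dtn muln1 expnS mul2n addnn.
have ot : #[t] = (2 ^ n.+1)%N.
  case/dvdn_pfactor: dt => // j le_jn ot; rewrite ot; congr (expn 2 _).
  by apply/eqP; rewrite eqn_leq le_jn leqNgt ltnS; apply: contra ndtn => ?; rewrite ot dvdn_exp2l.
rewrite -order_dvdn (negbTE ndtn) muln0 addn0 big1 ?addn0 // => k _.
by rewrite -order_dvdn ot dvdn_Pexp2l // leqNgt ltnS (ltnW (ltn_ord k)) muln0.
Qed.

Lemma card_Ldiv_sum A m : #|'Ldiv_m(A)| = (\sum_(t in A) (t ^+ m == 1)%g)%N.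
Proof.
rewrite -sum1_card [LHS]big_mkcond [RHS]big_mkcond; apply: eq_bigr => t _.
by rewrite !inE; case: (t \in A); case: (_ == _).
Qed.

Lemma psi_add_sum_card_Ldiv A n : {in A, forall t, #[t] %| 2 ^ n} ->
  (psi A + \sum_(k < n) 2 ^ k * #|'Ldiv_(2 ^ k)(A)|)%N = (#|A| * 2 ^ n)%N.
Proof.
move=> dA; rewrite /psi.
under [X in (_ + X)%N]eq_bigr do rewrite card_Ldiv_sum big_distrr /=.
rewrite exchange_big -big_split /= -sum1_card big_distrl /=.
by apply: eq_bigr => t At; rewrite mul1n order_add_sum_expg_eq1 ?dA.
Qed.

Lemma Ldiv_cycle_pow2 x m k : #[x] = (2 ^ m)%N -> k <= m ->
  'Ldiv_(2 ^ k)(<[x]>) = <[x ^+ (2 ^ (m - k))]>.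
Proof.
move=> ox le_km; have px : 2.-elt x by rewrite /p_elt ox pnatX.
rewrite -(OhmEabelian (px : 2.-group <[x]>)) ?(abelianS (Ohm_sub k _)) ?cycle_abelian //.
by rewrite (Ohm_p_cycle _ px) ox pfactorK.
Qed.

Lemma card_Ldiv_cycle_pow2 x m k : #[x] = (2 ^ m)%N -> k <= m ->
  #|'Ldiv_(2 ^ k)(<[x]>)| = (2 ^ k)%N.
Proof.
move=> ox le_km; rewrite (Ldiv_cycle_pow2 ox le_km) -orderE orderXdiv ox.
  by rewrite -expnB ?leq_subr // subKn.
by rewrite dvdn_exp2l ?leq_subr.
Qed.

Lemma psi_cycle_pow2 x m : #[x] = (2 ^ m)%N -> (3 * psi <[x]> = 2 * 4 ^ m + 1)%N.
Proof.
move=> ox; have dX t : t \in <[x]> -> #[t] %| 2 ^ m by rewrite -ox => /order_dvdG; rewrite -orderE.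
have := psi_add_sum_card_Ldiv dX; rewrite -orderE ox mulnn_expn2.
rewrite (eq_bigr (fun k : 'I_m => 4 ^ k)%N) => [|k _]; last first.
  by rewrite (card_Ldiv_cycle_pow2 ox (ltnW (ltn_ord k))) mulnn_expn2.
have : 0 < 4 ^ m by rewrite expn_gt0.
have := predn_exp 4 m; move: (\sum_(i < m) 4 ^ i)%N => S; lia.
Qed.

Lemma psi_lbound_card_Ldiv (G : {group gT}) n : #|G| = (2 ^ n)%N -> 0 < n ->
  (forall k, 0 < k < n -> #|'Ldiv_(2 ^ k)(G)| <= 2 ^ k.+1) ->
  (4 ^ n + 5 <= 3 * psi G)%N.
Proof.
case: n => // n oG _ leL; have dG t : t \in G -> #[t] %| 2 ^ n.+1 by rewrite -oG; apply: order_dvdG.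
have := psi_add_sum_card_Ldiv dG; rewrite oG mulnn_expn2 big_ord_recl /= expn0 mul1n.
have L1 : #|'Ldiv_1(G)| <= 1.
  rewrite -[leqRHS](cards1 (1 : gT)) subset_leq_card //.
  by apply/subsetP => t /LdivP[_]; rewrite expg1 => ->; rewrite inE.
have Lk : (\sum_(k < n) 2 ^ (bump 0 k) * #|'Ldiv_(2 ^ bump 0 k)(G)|
           <= 8 * \sum_(k < n) 4 ^ k)%N.
  rewrite big_distrr leq_sum // => k _; rewrite /bump /= add1n.
  rewrite (leq_trans (leq_mul (leqnn _) (leL k.+1 _))) ?ltnS ?ltn_ord //.
  by rewrite -mulnn_expn2 !expnS; nia.
move=> E; have := leq_add L1 Lk; rewrite -(leq_add2l (psi G)) E.
have : 0 < 4 ^ n by rewrite expn_gt0.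
have := predn_exp 4 n; rewrite expnS.
move: (\sum_(i < n) 4 ^ i)%N => S; lia.
Qed.

End ElementOrders.

Lemma psiC_pow2 n : (3 * psiC (2 ^ n) = 2 * 4 ^ n + 1)%N.
Proof.
rewrite /psiC /Zp; case: ifP => [n_gt1 | ].
  by rewrite Zp_cycle (@psi_cycle_pow2 _ _ n) // order_Zp1 Zp_cast.
case: n => [_ | n]; first by rewrite /psi big_set1 order1.
by rewrite expnS; have := expn_gt0 2 n; lia.
Qed.

Lemma isoGrp_of_hom_eq (gT : finGroupType) (G : {group gT}) p1 p2 :
  (forall (rT : finGroupType) (H : {group rT}),
     Presentation.hom H p1 = Presentation.hom H p2) ->
  Presentation.iso G p1 -> Presentation.iso G p2.
Proof. by move=> E iso rT H; rewrite iso E. Qed.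

Lemma invg_expg2 (gT : finGroupType) (y : gT) : y ^+ 2 = 1 -> y^-1 = y.
Proof. by move=> y2; apply/eqP; rewrite eq_invg_mul -expg2 y2. Qed.

Section Presentations.

Variables (gT : finGroupType) (G : {group gT}).

Lemma is_cyclic2_cycle x k : G :=: <[x]> -> #[x] = (2 ^ k)%N -> is_cyclic2 G k.
Proof.
move=> defG ox; apply: intro_isoGrp => [|rT H].
  by apply/existsP; exists x; rewrite /= -defG -ox expg_order.
case/existsP=> a /= /eqP[dH a2].
have d : #[a] %| #[x] by rewrite order_dvdn ox a2.
rewrite defG; apply/homgP; exists (eltm_morphism d).
by rewrite morphim_cycle ?cycle_id //= eltm_id.
Qed.

Lemma is_cyc_x_C2_dprod x y k :
  <[x]> \x <[y]> = G -> #[x] = (2 ^ k.-1)%N -> #[y] = 2 -> is_cyc_x_C2 G k.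
Proof.
move=> defG ox oy; have [_ defXY cYX _] := dprodP defG.
have cxy : commute x y by apply/esym/cent1P; rewrite -cent_cycle (subsetP cYX) ?cycle_id.
apply: intro_isoGrp => [|rT H].
  apply/existsP; exists (x, y); rewrite /= -(dprodWY defG) -ox -oy !expg_order cxy.
  by rewrite !eqxx.
case/existsP=> -[a b] /= /eqP[dH a1 b1 cab].
have da : #[a] %| #[x] by rewrite order_dvdn ox a1.
have db : #[b] %| #[y] by rewrite order_dvdn oy b1.
have cf : eltm_morphism db @* <[y]> \subset 'C(eltm_morphism da @* <[x]>).
  by rewrite !morphim_cycle ?cycle_id //= !eltm_id cent_cycle cycle_subG; apply/cent1P.
apply/homgP; exists (dprodm_morphism defG cf).
have := morphim_dprodm defG cf (subxx <[x]>) (subxx <[y]>); rewrite defXY => ->.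
rewrite !morphim_cycle ?cycle_id //= !eltm_id.
by rewrite -dH cent_joinEr // cent_cycle cycle_subG; apply/cent1P.
Qed.

Lemma is_D8_dihedral : G \isog 'D_8 -> is_D8 G.
Proof.
move=> isoG; apply: isoGrp_of_hom_eq (isoGrp_trans isoG (Grp_2dihedral (isT : 1 < 3))).
move=> rT H; apply/idP/idP; case/existsP=> -[x y] /= /eqP[dH x4 y2 xy];
  apply/existsP; exists (x, y) => /=; apply/eqP; congr (_, (_, (_, _))) => //.
- by rewrite -{2}(conjgK y x) xy conjVg invgK.
- by rewrite -{2}(conjgKV y x) xy conjVg invgK.
Qed.

Lemma is_Q_quaternion n : 2 < n -> G \isog 'Q_(2 ^ n) -> is_Q G n.
Proof.
move=> n_gt2 isoG; apply: isoGrp_of_hom_eq (isoGrp_trans isoG (Grp_quaternion n_gt2)).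
have e1 : (2 ^ n.-1 = 2 ^ (n - 2) * 2)%N by rewrite -expnSr; congr (expn 2 _); lia.
have e2 : n.-2 = n - 2 by lia.
move=> rT H; apply/idP/idP; case/existsP=> -[x y] /= /eqP[dH xq y2 xy];
  apply/existsP; exists (x, y) => /=; apply/eqP; congr (_, (_, (_, _))) => //.
- by rewrite y2 e2.
- by rewrite (expgM y 2 2) y2 e2 -expgM -e1.
- by rewrite -{2}(conjgK y x) xy conjVg invgK.
- by rewrite e1 expgM xq -expgM.
- by rewrite -xq e2.
- by rewrite -{2}(conjgKV y x) xy conjVg invgK.
Qed.

Lemma is_M_modular n : 3 < n -> G \isog 'Mod_(2 ^ n) -> is_M G n.
Proof.
move=> n_gt3 isoG; apply: isoGrp_of_hom_eq
  (isoGrp_trans isoG (Grp_modular_group (p := 2) (n := n) (isT : prime 2) (ltnW n_gt3))).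
have e2 : (2 ^ n.-2).+1 = (2 ^ (n - 2) + 1)%N by rewrite addn1; congr (expn 2 _).+1; lia.
move=> rT H; apply/idP/idP; case/existsP=> -[x y] /= /eqP[dH xq y2 xy];
  apply/existsP; exists (x, y) => /=; apply/eqP; congr (_, (_, (_, _))) => //.
- by rewrite (invg_expg2 y2) xy e2.
- by rewrite -(invg_expg2 y2) xy e2.
Qed.

End Presentations.

Section ModularLattice.

Variables (gT : finGroupType) (G : {group gT}).

Lemma Mgroup_of_permutable :
  (forall H K : {group gT}, H \subset G -> K \subset G -> commute H K) -> Mgroup G.
Proof.
move=> pG H K L sHG sKG _ sHL.
rewrite (comm_joingE (pG H [group of K :&: L] sHG _)) ?subIset ?sKG //.
by rewrite (comm_joingE (pG H K sHG sKG)) group_modl.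
Qed.

Lemma Mgroup_abelian : abelian G -> Mgroup G.
Proof.
move=> cGG; apply: Mgroup_of_permutable => H K sHG sKG; apply: normC.
by rewrite (subset_trans sHG) // normal_norm // -sub_abelian_normal.
Qed.

(* Subgroups containing [z] are normal, and two subgroups missing [z] commute elementwise. *)
Lemma Mgroup_of_der1_cycle (A : {group gT}) z : abelian A -> G^`(1) \subset <[z]> ->
  (forall H : {group gT}, H \subset G -> z \notin H -> H \subset A) -> Mgroup G.
Proof.
move=> cAA sG'z sHA; apply: Mgroup_of_permutable => H K sHG sKG.
have nsG (L : {group gT}) : L \subset G -> z \in L -> L <| G.
  by move=> sLG zL; rewrite sub_der1_normal // (subset_trans sG'z) ?cycle_subG.
have [zK | zK] := boolP (z \in K).
  by apply: normC; rewrite (subset_trans sHG) ?normal_norm ?nsG.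
have [zH | zH] := boolP (z \in H).
  by apply/esym/normC; rewrite (subset_trans sKG) ?normal_norm ?nsG.
by apply/normC/cents_norm; rewrite (sub_abelian_cent2 cAA) ?sHA.
Qed.

End ModularLattice.

Lemma expg2_index2 (gT : finGroupType) (G H : {group gT}) t :
  H \subset G -> #|G : H| = 2 -> t \in G -> t ^+ 2 \in H.
Proof.
move=> sHG iHG Gt; have [Ht | Ht] := boolP (t \in H); first by rewrite groupX.
have defHt : H :* t = G :\: H by rewrite (rcoset_index2 sHG) // inE Ht.
apply: contraR Ht => Ht2; have : t ^+ 2 \in G :\: H by rewrite inE Ht2 groupX.
by rewrite -defHt expgS expg1 => /rcosetP[h Hh /mulIg ->].
Qed.

Lemma psi_cycle_add_compl (gT : finGroupType) (G : {group gT}) x m :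
    x \in G -> #[x] = (2 ^ m)%N ->
  (3 * psi G = 2 * 4 ^ m + 1 + 3 * \sum_(t in G :\: <[x]>) #[t])%N.
Proof.
move=> Gx ox; rewrite /psi (big_setID <[x]>) /= (setIidPr _) ?cycle_subG // mulnDr.
by rewrite -[\sum_(t in <[x]>) _]/(psi <[x]>) (psi_cycle_pow2 ox).
Qed.

Section MaximalCycle.

Variables (gT : finGroupType) (G : {group gT}) (x : gT) (n : nat).
Hypotheses (oG : #|G| = (2 ^ n)%N) (n_gt0 : 0 < n) (Gx : x \in G) (ox : #[x] = (2 ^ n.-1)%N).

Let sXG : <[x]> \subset G. Proof. by rewrite cycle_subG. Qed.

Lemma card_maximal_cycle_double : #|G| = (2 * #|<[x]>|)%N.
Proof. by rewrite -orderE ox oG -expnS prednK. Qed.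

Lemma index_maximal_cycle : #|G : <[x]>| = 2.
Proof. by rewrite -divgS // card_maximal_cycle_double mulnK. Qed.

Lemma card_maximal_cycle_compl : #|G :\: <[x]>| = (2 ^ n.-1)%N.
Proof.
by rewrite cardsD (setIidPr sXG) card_maximal_cycle_double -orderE ox mul2n -addnn addnK.
Qed.

Lemma sum_order_maximal_cycle_compl c : {in G :\: <[x]>, forall t, #[t] = c} ->
  (\sum_(t in G :\: <[x]>) #[t] = c * 2 ^ n.-1)%N.
Proof.
move=> oc; rewrite (eq_bigr (fun=> c)) => [|t /oc //].
by rewrite sum_nat_const card_maximal_cycle_compl mulnC.
Qed.

(* With [q = 2 ^ n.-1], [3 psi G <= 2 q^2 + 1 + 3 c q] and [3 psiC (2 ^ n) = 8 q^2 + 1]. *)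
Lemma psi_maximal_cycle_small c :
  (\sum_(t in G :\: <[x]>) #[t] <= c * 2 ^ n.-1)%N -> (231 * c + 46 <= 94 * 2 ^ n.-1)%N ->
  (77 * psi G <= 31 * psiC (2 ^ n))%N.
Proof.
move=> le_sum le_c; have := psi_cycle_add_compl Gx ox; have := psiC_pow2 n.
have -> : (4 ^ n = 4 * 4 ^ n.-1)%N by rewrite -expnS prednK.
rewrite -mulnn_expn2; have : 0 < 2 ^ n.-1 by rewrite expn_gt0.
move: le_sum le_c; move: (2 ^ n.-1)%N (\sum_(t in _) _)%N => q S; nia.
Qed.

End MaximalCycle.

Lemma cycle_involution_in (gT : finGroupType) (H : {group gT}) x m :
  #[x] = (2 ^ m.+1)%N -> H :&: <[x]> != 1 -> x ^+ (2 ^ m) \in H.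
Proof.
move=> ox ntHX; have px : 2.-elt x by rewrite /p_elt ox pnatX.
have [pr2 d2 _] := pgroup_pdiv (pgroupS (subsetIr H _) px) ntHX.
have [w /setIP[Hw Xw] ow] := Cauchy pr2 d2.
have oz : #[x ^+ (2 ^ m)] = 2 by rewrite orderXdiv ox ?dvdn_exp2l // expnS mulnK ?expn_gt0.
have /eqP defW : <[w]> :==: <[x ^+ (2 ^ m)]>.
  by rewrite (eq_subG_cyclic (cycle_cyclic x)) ?cycle_subG ?mem_cycle // -!orderE ow oz.
by rewrite -(cycle_subG (x ^+ _)) -defW cycle_subG.
Qed.

Lemma psi_le_card_exponent (gT : finGroupType) (G : {group gT}) :
  (psi G <= #|G| * exponent G)%N.
Proof.
rewrite /psi -sum_nat_const leq_sum // => t Gt.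
by rewrite dvdn_leq ?exponent_gt0 ?dvdn_exponent.
Qed.

Lemma card_Ldiv_le_index (gT : finGroupType) (G X : {group gT}) m :
  abelian G -> X \subset G -> (#|'Ldiv_m(G)| <= #|G : X| * #|'Ldiv_m(X)|)%N.
Proof.
move=> cGG sXG; pose L := Group (group_Ldiv m cGG).
have LX : L :&: X = 'Ldiv_m(X) by rewrite /= setIC setIA (setIidPl sXG).
rewrite -(leq_pmul2r (cardG_gt0 X)) -[#|'Ldiv_m(G)|]/#|L| mul_cardG LX.
rewrite mulnAC [(#|G : X| * _)%N]mulnC.
by rewrite Lagrange // leq_mul2r subset_leq_card ?orbT // mulG_subG sXG subsetIl.
Qed.

Variant psi_spec (gT : finGroupType) (G : {group gT}) (n : nat) : Prop :=
  | PsiSmall of (77 * psi G <= 31 * psiC (2 ^ n))%N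
  | PsiCyclic of psi G = psiC (2 ^ n) & Mgroup G & is_cyclic2 G n
  | PsiCycxC2 of (4 ^ n + 5 <= 3 * psi G)%N & Mgroup G & 2 <= n & is_cyc_x_C2 G n
  | PsiModular of (4 ^ n + 5 <= 3 * psi G)%N & Mgroup G & 4 <= n & is_M G n
  | PsiD8 of n = 3 & psi G = 19 & is_D8 G
  | PsiQ8 of n = 3 & psi G = 27 & Mgroup G & is_Q G 3
  | PsiQ16 of n = 4 & psi G = 75 & is_Q G 4.

Section Classification.

Variables (gT : finGroupType) (G : {group gT}) (n : nat).
Hypothesis oG : #|G| = (2 ^ n)%N.

Lemma psi_spec_small_exponent : (4 * exponent G <= 2 ^ n)%N -> psi_spec G n.
Proof.
move=> le_eG; apply: PsiSmall; have := psiC_pow2 n; have := psi_le_card_exponent G.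
rewrite oG -mulnn_expn2; move: le_eG; move: (exponent G) (2 ^ n)%N => e q; nia.
Qed.

Lemma psi_spec_cycle x : G :=: <[x]> -> #[x] = (2 ^ n)%N -> psi_spec G n.
Proof.
move=> defG ox; apply: PsiCyclic.
- by apply/eqP; rewrite -(eqn_pmul2l (isT : 0 < 3)) psiC_pow2 defG (psi_cycle_pow2 ox).
- by apply: Mgroup_abelian; rewrite defG cycle_abelian.
- exact: is_cyclic2_cycle defG ox.
Qed.

Lemma psi_spec_abelian x : 0 < n -> x \in G -> #[x] = (2 ^ n.-1)%N ->
  #[x] = exponent G -> abelian G -> psi_spec G n.
Proof.
move=> n_gt0 Gx ox eGx cGG; have sXG : <[x]> \subset G by rewrite cycle_subG.
have [K /complP[tiXK defXK]] := splitsP (abelian_splits Gx eGx cGG).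
have oK : #|K| = 2.
  apply/eqP; rewrite -(eqn_pmul2l (cardG_gt0 <[x]>)) -TI_cardMg // defXK.
  by rewrite (card_maximal_cycle_double oG n_gt0 ox) mulnC.
have /cyclicP[y defK] : cyclic K by apply: prime_cyclic; rewrite oK.
have defG : <[x]> \x <[y]> = G.
  by rewrite -defK dprodE // (sub_abelian_cent2 cGG) // -defXK ?mulG_subl ?mulG_subr.
have n_gt1 : 1 < n.
  have : G :!=: 1 by rewrite -cardG_gt1 oG -(expn0 2) ltn_exp2l.
  by rewrite trivg_exponent -eGx ox dvdn1 -ltn_predRL lt0n; apply: contra => /eqP->.
apply: PsiCycxC2 => //.
- apply: (psi_lbound_card_Ldiv oG n_gt0) => k /andP[_ lt_kn].
  rewrite (leq_trans (card_Ldiv_le_index _ cGG sXG)) // (index_maximal_cycle oG) //.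
  by rewrite (card_Ldiv_cycle_pow2 ox) ?expnS // -ltnS prednK.
- exact: Mgroup_abelian.
- by apply: is_cyc_x_C2_dprod defG ox _; rewrite orderE -defK.
Qed.

Lemma psi_spec_modular : extremal_class G = ModularGroup -> psi_spec G n.
Proof.
case/modular_group_classP=> p p_pr [m n_ge isoG].
have m_gt2 : 2 < m by apply: leq_trans n_ge; rewrite leq_addl.
have Epm : (p ^ m = 2 ^ n)%N by rewrite -oG (card_isog isoG) card_modular_group.
have : p %| 2 ^ n by rewrite -Epm dvdn_exp // ltnW // ltnW.
rewrite Euclid_dvdX // dvdn_prime2 // => /andP[/eqP p2 n_gt0]; subst p.
have Emn := expnI (isT : 1 < 2) Epm; subst m; move: m_gt2 => n_gt2.
have [[x y] genG modG] := generators_modular_group p_pr n_gt2 isoG.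
have [_ _ [defG' _ _] _ defOhm] := modular_group_structure p_pr n_gt2 genG isoG modG.
have {}defOhm : forall k, 0 < k < n.-1 ->
    <[x ^+ (2 ^ (n - k.+1))]> \x <[y]> = 'Ohm_k(G) /\ #|'Ohm_k(G)| = (2 ^ k.+1)%N.
  by move: defOhm; case: eqP => // [[m3]]; move: n_ge; rewrite m3.
have [_ Gx ox /setDP[Gy _]] := genG; have [pG _ _ _ _] := extremal_generators_facts p_pr genG.
have /defOhm[defO1 _] : 0 < 1 < n.-1 by lia.
apply: PsiModular => //; last exact: is_M_modular.
  apply: (psi_lbound_card_Ldiv oG n_gt0) => k /andP[k_gt0 lt_kn].
  have [lt_kn1 | le_n1k] := ltnP k n.-1.
    have /defOhm[_ <-] : 0 < k < n.-1 by lia.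
    by rewrite subset_leq_card // (OhmE k pG) subset_gen.
  by rewrite (leq_trans (subset_leq_card (subsetIl G _))) // oG leq_exp2l //; lia.
apply: (@Mgroup_of_der1_cycle _ _ 'Ohm_1(G)%G (x ^+ (2 ^ n.-2))).
- by have [_ <- cYX _] := dprodP defO1; rewrite abelianM !cycle_abelian cYX.
- by rewrite defG'.
move=> H sHG zH; have tiHX : H :&: <[x]> = 1.
  apply/eqP; apply: contraNT zH; apply: cycle_involution_in.
  by rewrite ox; congr (expn 2 _); lia.
apply/subsetP => h Hh /=; rewrite (OhmE 1 pG) mem_gen // inE (subsetP sHG) //= inE expn1.
have : h ^+ 2 \in H :&: <[x]>.
  by rewrite inE groupX //= (expg2_index2 _ (index_maximal_cycle oG n_gt0 Gx ox))
       ?(subsetP sHG) // cycle_subG.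
by rewrite tiHX inE.
Qed.

Lemma psi_spec_dihedral : 2 < n -> extremal_class G = Dihedral -> psi_spec G n.
Proof.
move=> n_gt2 /dihedral_classP[m n_gt1 isoG].
have Emn : m = n by apply: (expnI (isT : 1 < 2)); rewrite -oG (card_isog isoG) card_2dihedral.
subst m; have [[x y] genG _] := generators_2dihedral n_gt1 isoG.
have [[_ o2 _] _ _ _ _] := dihedral2_structure n_gt1 genG isoG.
have [_ Gx ox _] := genG; have n_gt0 := ltnW n_gt1.
have Eouter := sum_order_maximal_cycle_compl oG n_gt0 Gx ox o2.
have [n_gt3 | n3] : 3 < n \/ n = 3 by lia.
  apply/PsiSmall/(psi_maximal_cycle_small oG n_gt0 Gx ox (c := 2)); first by rewrite Eouter.
  by rewrite (leq_trans _ (leq_mul (leqnn 94) (leq_pexp2l _ (_ : 3 <= n.-1)))) //; lia.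
subst n; apply: PsiD8 (is_D8_dihedral isoG) => //.
by apply/eqP; rewrite -(eqn_pmul2l (isT : 0 < 3)) (psi_cycle_add_compl Gx ox) Eouter.
Qed.

Lemma psi_spec_quaternion : extremal_class G = Quaternion -> psi_spec G n.
Proof.
case/quaternion_classP=> m n_gt2 isoG.
have Emn : m = n by apply: (expnI (isT : 1 < 2)); rewrite -oG (card_isog isoG) card_quaternion.
subst m; have [[x y] genG _] := generators_quaternion n_gt2 isoG.
have [[_ o4 _] [defG' _ _ _] [_ _ inv1 _ _] _ _] := quaternion_structure n_gt2 genG isoG.
have [_ Gx ox _] := genG; have n_gt0 := ltnW (ltnW n_gt2).
have Eouter := sum_order_maximal_cycle_compl oG n_gt0 Gx ox o4.
have E3psi := psi_cycle_add_compl Gx ox; rewrite Eouter in E3psi.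
have [n_gt4 | [n4 | n3]] : 4 < n \/ n = 4 \/ n = 3 by lia.
- apply/PsiSmall/(psi_maximal_cycle_small oG n_gt0 Gx ox (c := 4)); first by rewrite Eouter.
  by rewrite (leq_trans _ (leq_mul (leqnn 94) (leq_pexp2l _ (_ : 4 <= n.-1)))) //; lia.
- subst n; apply: PsiQ16 (is_Q_quaternion _ isoG) => //.
  by apply/eqP; rewrite -(eqn_pmul2l (isT : 0 < 3)) E3psi.
subst n; apply: PsiQ8 (is_Q_quaternion _ isoG) => //.
  by apply/eqP; rewrite -(eqn_pmul2l (isT : 0 < 3)) E3psi.
(* [x ^+ 2] is the unique involution of [Q_8], so a subgroup avoiding it is trivial. *)
have [pG _ _ _ _] := extremal_generators_facts (isT : prime 2) genG.
apply: (@Mgroup_of_der1_cycle _ _ 1%G (x ^+ 2)) => [||H sHG zH]; rewrite ?abelian1 ?defG' //.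
apply: contraR zH; rewrite subG1 => ntH.
have [pr2 dv2 _] := pgroup_pdiv (pgroupS sHG pG) ntH; have [u Hu ou] := Cauchy pr2 dv2.
by rewrite -(inv1 u (subsetP sHG u Hu) ou).
Qed.

Lemma sum_order_semidihedral_compl x y :
    3 < n -> extremal_generators G 2 n (x, y) -> G \isog 'SD_(2 ^ n) -> #[y] = 2 ->
  (\sum_(t in G :\: <[x]>) #[t] <= 3 * 2 ^ n.-1)%N.
Proof.
move=> n_gt3 genG isoG oy; have [_ Gx ox X'y] := genG.
have [[_ _ conjX] _ _ _ _] := semidihedral_structure n_gt3 genG isoG oy.
have iXG := index_maximal_cycle oG (ltnW (ltnW (ltnW n_gt3))) Gx ox.
set r := (2 ^ n.-2)%N in conjX.
have Eq : (2 ^ n.-1 = 2 * r)%N by rewrite -expnS; congr (expn 2 _); lia.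
rewrite -(rcoset_index2 _ iXG X'y) ?cycle_subG // -rcosetE big_imset /=; last first.
  by move=> a b _ _; apply: mulIg.
(* For [z] in [<[x]>], [(z y)^2 = z ^+ r], so [#[z y]] is at most 2 or 4 as [z ^+ r = 1] or not. *)
have yV : y^-1 = y by apply: invg_expg2; rewrite -oy expg_order.
have le_ord z : z \in <[x]> -> (#[z * y] + 2 * (z ^+ r == 1)%g <= 4)%N.
  move=> Xz; have Ezy : (z * y) ^+ 2 = z ^+ r.
    rewrite expgS expg1 -mulgA -{1}yV mulgA -mulgA -conjgE conjX // -expgS prednK //.
    by rewrite expn_gt0.
  have zr2 : (z ^+ r) ^+ 2 = 1.
    apply/eqP; rewrite -expgM -order_dvdn mulnC -Eq -ox.
    by rewrite (dvdn_trans (order_dvdG Xz)) // -orderE.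
  case: eqP => [zr1 | _]; last by rewrite addn0 dvdn_leq // order_dvdn (expgM _ 2 2) Ezy zr2.
  by rewrite muln1 -[4]/(2 + 2) leq_add2r dvdn_leq // order_dvdn Ezy zr1.
have : (\sum_(z in <[x]>) (#[z * y] + 2 * (z ^+ r == 1)%g) <= \sum_(z in <[x]>) 4)%N.
  exact: leq_sum.
rewrite big_split /= -big_distrr -card_Ldiv_sum sum_nat_const -orderE ox.
rewrite (card_Ldiv_cycle_pow2 ox (leq_pred _)) -/r Eq /=.
by set S := (\sum_(i in _) _)%N; lia.
Qed.

Lemma psi_spec_semidihedral : extremal_class G = SemiDihedral -> psi_spec G n.
Proof.
case/semidihedral_classP=> m n_gt3 isoG.
have Emn : m = n by apply: (expnI (isT : 1 < 2)); rewrite -oG (card_isog isoG) card_semidihedral.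
subst m; have [[x y] genG [oy _]] := generators_semidihedral n_gt3 isoG.
have [_ Gx ox _] := genG; have n_gt0 := ltnW (ltnW (ltnW n_gt3)).
apply/PsiSmall/(psi_maximal_cycle_small oG n_gt0 Gx ox (c := 3)).
  exact: sum_order_semidihedral_compl genG isoG oy.
by rewrite (leq_trans _ (leq_mul (leqnn 94) (leq_pexp2l _ (_ : 3 <= n.-1)))) //; lia.
Qed.

Lemma psi_spec_maximal_cycle x : 2.-group G -> 0 < n -> x \in G ->
  #[x] = (2 ^ n.-1)%N -> #[x] = exponent G -> psi_spec G n.
Proof.
move=> pG n_gt0 Gx ox eGx; have [cGG | not_cGG] := boolP (abelian G).
  exact: psi_spec_abelian Gx ox eGx cGG.
have n_gt2 : 2 < n.
  by rewrite ltnNge; apply: contra not_cGG => le_n2; rewrite (p2group_abelian pG) // oG pfactorK.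
have := maximal_cycle_extremal pG not_cGG (cycle_cyclic x) _ (index_maximal_cycle oG n_gt0 Gx ox).
rewrite cycle_subG Gx /extremal2 => /(_ isT)/orP[/eqP | /andP[_]]; first exact: psi_spec_modular.
case Ecl: (extremal_class G) => //= _.
- exact: psi_spec_dihedral.
- exact: psi_spec_semidihedral.
- exact: psi_spec_quaternion.
Qed.

End Classification.

Lemma psiP (gT : finGroupType) (G : {group gT}) n :
  2.-group G -> #|G| = (2 ^ n)%N -> psi_spec G n.
Proof.
move=> pG oG; have [x Gx eGx] := exponent_witness (pgroup_nil pG).
have /dvdn_pfactor[//|j le_jn ox] : #[x] %| 2 ^ n by rewrite -oG order_dvdG.
have [lt_j2n | le_nj2] := ltnP j.+1 n.
  by apply: (psi_spec_small_exponent oG); rewrite eGx ox -(expnD 2 2) leq_exp2l.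
have [lt_jn | le_nj] := ltnP j n.
  have n_gt0 : 0 < n by apply: leq_ltn_trans lt_jn.
  have Ej : j = n.-1 by lia.
  by apply: (psi_spec_maximal_cycle oG pG n_gt0 Gx); rewrite ?eGx // ox Ej.
have Ejn : j = n by apply/eqP; rewrite eqn_leq le_jn.
apply: (psi_spec_cycle (x := x)); last by rewrite ox Ejn.
by apply/eqP; rewrite eq_sym eqEcard cycle_subG Gx oG -orderE ox Ejn /=.
Qed.

Lemma ltr_nat_ratio (R : numFieldType) (a b c d : nat) : (0 < b)%N -> (0 < d)%N ->
  ((a%:R / b%:R < c%:R / d%:R :> R)%R = (a * d < c * b)%N).
Proof.
move=> b_gt0 d_gt0.
by rewrite ltr_pdivrMr ?ltr0n // mulrAC ltr_pdivlMr ?ltr0n // -!natrM ltr_nat.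
Qed.

Lemma eqr_nat_ratio (R : numFieldType) (a b c d : nat) : (0 < b)%N -> (0 < d)%N ->
  ((a%:R / b%:R == c%:R / d%:R :> R)%R = (a * d == c * b)%N).
Proof.
by move=> b_gt0 d_gt0; rewrite eqr_div ?pnatr_eq0 -?lt0n // -!natrM eqr_nat.
Qed.

Local Close Scope group_scope.

Theorem proposition3p3 (gT : finGroupType) (G : {group gT}) (H2 : pgroup 2 G) :
  ((19%:R / 43%:R < psi' G)%R ->
     Mgroup G /\
     ((exists k : nat, is_cyclic2 G k)
      \/ (exists k : nat, (2 <= k)%N /\ is_cyc_x_C2 G k)
      \/ (exists k : nat, (4 <= k)%N /\ is_M G k)
      \/ is_Q G 3)) /\
  (psi' G = (19%:R / 43%:R)%R -> is_D8 G) /\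
  ((31%:R / 77%:R < psi' G)%R -> (psi' G < 19%:R / 43%:R)%R -> is_Q G 4).
Proof.
move: (logn 2 #|G|) (card_pgroup H2) => n oG.
have C_gt0 : (0 < psiC (2 ^ n))%N by have := psiC_pow2 n; lia.
rewrite /psi' oG !ltr_nat_ratio //.
have eq_ratio : ((psi G)%:R / (psiC (2 ^ n))%:R = 19%:R / 43%:R :> rat)%R ->
    (psi G * 43 = 19 * psiC (2 ^ n))%N.
  by move/eqP; rewrite eqr_nat_ratio // => /eqP.
case: (psiP H2 oG) (psiC_pow2 n) => [? | ? MG cycG | ? MG ? cxcG | ? MG ? modG
    | n3 ? D8 | n3 ? MG Q8 | n4 ? Q16] EC; try subst n;
  (split; [move=> ? | split=> [/eq_ratio ? | ? ?]]); try done; try (exfalso; lia).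
- by split; [| left; exists n].
- by split; [| right; left; exists n].
- by split; [| right; right; left; exists n].
- by split; [| right; right; right].
Qed.
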